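(* Let $X_1, \dots, X_n$ be nonnegative random variables on a probability space $(\Omega, \mathcal{F}, \mathbb{P})$, let $\emptyset \neq \mathcal{S} \subseteq \{1, \dots, n\}$, and let $\mathbf{u} = (u_\lambda : \emptyset \neq \lambda \subseteq \mathcal{S})$ be real thresholds. Let $\emptyset \neq \mu \subseteq \mathcal{S}$ and suppose $u_\mu \geq u_\lambda$ for all $\lambda$ with $\mu \subsetneq \lambda \subseteq \mathcal{S}$. Then for every $\sigma \subseteq \mu$, $$B_\mu(\mathbf{u}) = A_\mu(u_\mu) \cap \bigcap_{\mu \subsetneq \lambda \subseteq \mathcal{S}} \overline{A_{\lambda \setminus \sigma}(u_\lambda)}.$$
   Context: For $\mu \subseteq \mathcal{S}$ and $u \in \mathbb{R}$, $A_\mu(u) := \bigcap_{i \in \mu} \{X_i > u\}$ (with $A_\emptyset(u) = \Omega$). For $\mu \subseteq \mathcal{S}$, $B_\mu(\mathbf{u}) := A_\mu(u_\mu) \cap \bigcap_{\mu \subsetneq \lambda \subseteq \mathcal{S}} \overline{A_\lambda(u_\lambda)}$, where $\overline{E}$ denotes the complement of an event $E$ (and $A_\emptyset(u_\emptyset) := \Omega$). *)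

From HB Require Import structures.
From mathcomp Require Import all_boot all_order all_algebra.
From mathcomp Require Import all_classical all_reals all_analysis.
Set Implicit Arguments. Unset Strict Implicit. Unset Printing Implicit Defensive.
Import Order.TTheory GRing.Theory Num.Theory.
Local Open Scope classical_set_scope.
Local Open Scope ring_scope.

Definition Aev {T : Type} {R : realType} {n : nat}
  (X : 'I_n -> T -> R) (mu : {set 'I_n}) (c : R) : set T :=
  [set w | forall i, i \in mu -> c < X i w].

Definition Bev {T : Type} {R : realType} {n : nat}
  (X : 'I_n -> T -> R) (S : {set 'I_n}) (u : {set 'I_n} -> R)
  (mu : {set 'I_n}) : set T :=
  Aev X mu (u mu) `&`
  \bigcap_(lam in [set l : {set 'I_n} | (mu \proper l) && (l \subset S)])
     ~` Aev X lam (u lam).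

From HB Require Import structures.
From mathcomp Require Import all_boot all_order all_algebra.
From mathcomp Require Import all_classical all_reals all_analysis.
Import Order.TTheory GRing.Theory Num.Theory.
Local Open Scope classical_set_scope.
Local Open Scope ring_scope.

(* On A_mu(u_mu) every X_i with i in sigma (a subset of mu) already exceeds
   u_mu >= u_lam, so removing sigma from lam does not change which points of
   A_mu(u_mu) lie in A_lam(u_lam); hence each complement in the definition of
   B_mu may be replaced by the complement of A_{lam \ sigma}(u_lam). *)

Lemma setI_bigcap_congr (T I : Type) (P : set I) (A : set T) (F G : I -> set T) :
  (forall i, P i -> A `&` F i = A `&` G i) ->
  A `&` \bigcap_(i in P) F i = A `&` \bigcap_(i in P) G i.
Proof.
move=> AFG; apply/seteqP; split=> x [Ax capx]; split=> // i Pi.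
- have [//] : (A `&` G i) x by rewrite -AFG //; split=> //; exact: capx.
- have [//] : (A `&` F i) x by rewrite AFG //; split=> //; exact: capx.
Qed.

Lemma setI_setC_congr (T : Type) (A B C : set T) :
  A `&` B = A `&` C -> A `&` ~` B = A `&` ~` C.
Proof.
move=> ABC; rewrite -!setDE -[A `\` B]set0U -(setDv A) -setDIr ABC.
by rewrite setDIr setDv set0U.
Qed.

Section Exceedance.
Variables (T : Type) (R : realType) (n : nat) (X : 'I_n -> T -> R).

Lemma Aev_subset {A B : {set 'I_n}} {c : R} :
  A \subset B -> Aev X B c `<=` Aev X A c.
Proof. by move=> /fintype.subsetP AB x XB i /AB; exact: XB. Qed.

Lemma Aev_le {A : {set 'I_n}} {c c' : R} : c' <= c -> Aev X A c `<=` Aev X A c'.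
Proof. by move=> c'c x XA i /XA; exact: le_lt_trans. Qed.

Lemma AevU (A B : {set 'I_n}) (c : R) :
  Aev X (A :|: B) c = Aev X A c `&` Aev X B c.
Proof.
apply/seteqP; split=> [x XAB | x [XA XB] i].
- by split=> i iAB; apply: XAB; rewrite finset.in_setU iAB ?orbT.
- by rewrite finset.in_setU => /orP[/XA|/XB].
Qed.

Lemma setI_Aev_setD (mu lam sigma : {set 'I_n}) (c c' : R) :
  sigma \subset mu -> c' <= c ->
  Aev X mu c `&` Aev X (lam :\: sigma) c' = Aev X mu c `&` Aev X lam c'.
Proof.
move=> sigma_mu c'c; apply/seteqP; split=> x [Xmu Xlam]; split=> //.
- have Xsigma : Aev X sigma c' x
    := Aev_le c'c _ (Aev_subset sigma_mu _ Xmu).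
  apply: (@Aev_subset _ (lam :\: sigma :|: sigma)); last by rewrite AevU.
  apply/fintype.subsetP=> i ilam.
  by rewrite finset.in_setU finset.in_setD ilam andbT orNb.
- exact: Aev_subset (finset.subsetDl lam sigma) _ Xlam.
Qed.

End Exceedance.

Theorem lemma15 (d : measure_display) (T : measurableType d) (R : realType)
  (P : probability T R) (n : nat) (X : 'I_n -> {RV P >-> R})
  (Xnn : forall i w, 0 <= X i w)
  (S : {set 'I_n}) (S0 : S != finset.set0)
  (u : {set 'I_n} -> R)
  (mu : {set 'I_n}) (mu0 : mu != finset.set0) (muS : mu \subset S)
  (hu : forall lam : {set 'I_n}, mu \proper lam -> lam \subset S -> u lam <= u mu)
  (sigma : {set 'I_n}) (hsig : sigma \subset mu) :
  Bev (fun i => (X i : T -> R)) S u mu =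
  Aev (fun i => (X i : T -> R)) mu (u mu) `&`
  \bigcap_(lam in [set l : {set 'I_n} | (mu \proper l) && (l \subset S)])
     ~` Aev (fun i => (X i : T -> R)) (lam :\: sigma) (u lam).
Proof.
apply: setI_bigcap_congr => lam /andP[mu_lam lamS].
by apply: setI_setC_congr; rewrite setI_Aev_setD // hu.
Qed.
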